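(* Fix $d\ge4$. Then there are constants $c,C>0$ depending only on $d$ such that for all $n\ge d$, $$c\,\frac{n^{d-1}}{\varphi(n)}\le p_{n,d}\le C\,\frac{n^{d-1}}{\varphi(n)};$$ in particular $p_{n,d}\ge c\,n^{d-2}$.
   Context: The affine group of $\mathbb{Z}_n$ is the group of maps $x\mapsto ax+b$ with $a\in\mathbb{Z}_n^*$, $b\in\mathbb{Z}_n$ (isomorphic to $\mathbb{Z}_n^*\ltimes\mathbb{Z}_n$), acting on $d$-element subsets of $\mathbb{Z}_n$ elementwise. $p_{n,d}$ is the number of orbits of this action on the set of $d$-element subsets of $\mathbb{Z}_n$. $\varphi$ is Euler's totient function. *)

From mathcomp Require Import all_boot all_order all_algebra.
Set Implicit Arguments. Unset Strict Implicit. Unset Printing Implicit Defensive.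

(* Z_n is modelled as 'I_n with arithmetic mod n (n >= 1 whenever used). *)

Definition affimg (n a b : nat) (A : {set 'I_n}) : {set 'I_n} :=
  [set x : 'I_n | [exists y in A, val x == (a * val y + b) %% n]].

Definition affgrp (n : nat) : {set 'I_n * 'I_n} :=
  [set ab : 'I_n * 'I_n | coprime ab.1 n].

Definition aff_orbit (n : nat) (A : {set 'I_n}) : {set {set 'I_n}} :=
  [set affimg (val ab.1) (val ab.2) A | ab in affgrp n].

Definition dsubsets (n d : nat) : {set {set 'I_n}} :=
  [set A : {set 'I_n} | #|A| == d].

Definition p_nd (n d : nat) : nat :=
  #|[set aff_orbit A | A in dsubsets n d]|.

From mathcomp Require Import all_boot all_order all_algebra all_fingroup.
From mathcomp Require Import zify.
Set Implicit Arguments. Unset Strict Implicit. Unset Printing Implicit Defensive.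

(** By Burnside's lemma, [p_nd n d * (n * totient n)] counts the pairs (g, A)
    of an affine map g and a d-set A fixed by g.  The identity alone fixes
    C(n, d) >= (n/d)^d sets, which gives the lower bound.  A d-set fixed by a
    permutation with f fixed points consists of some fixed points and j
    nontrivial cycles of length >= 2, so there are at most
    sum_j C(n, j) (f + 1)^(d - 2j) of them.  The map x |-> a x + b has at most
    gcd(a - 1, n) fixed points, each point is fixed for a single b, and
    sum_a gcd(a - 1, n)^3 = O(n^3); hence the total is O(2^d n^d). *)

Lemma leq_expn2r m n e : m <= n -> m ^ e <= n ^ e.
Proof. by case: e => // e le_mn; rewrite leq_exp2r. Qed.

Lemma ffact_leq_expn n k : n ^_ k <= n ^ k.
Proof. by elim: k => // k IHk; rewrite ffactnSr expnSr leq_mul ?leq_subr. Qed.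

Lemma bin_leq_expn n k : 'C(n, k) <= n ^ k.
Proof.
by apply: leq_trans (ffact_leq_expn n k); rewrite -bin_ffact leq_pmulr ?fact_gt0.
Qed.

Lemma expn_leq_bin n d : d <= n -> n ^ d <= d ^ d * 'C(n, d).
Proof.
move=> le_dn; suff ffactP k : k <= d -> n ^ k * d ^_ k <= d ^ k * n ^_ k.
  by have := ffactP d (leqnn d); rewrite ffactnn -bin_ffact mulnA leq_pmul2r ?fact_gt0.
elim: k => // k IHk lt_kd; rewrite !ffactnSr !expnSr.
rewrite mulnACA [leqRHS]mulnACA leq_mul ?IHk ?(ltnW lt_kd) //; nia.
Qed.

Lemma totient_leq n : totient n <= n.
Proof.
rewrite totient_count_coprime; apply: (@leq_trans (\sum_(0 <= i < n) 1)).
  by apply: leq_sum => i _; apply: leq_b1.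
by rewrite sum_nat_const_nat muln1 subn0.
Qed.

Lemma cardsU_disjoint (T : finType) (A B : {set T}) :
  [disjoint A & B] -> #|A :|: B| = #|A| + #|B|.
Proof. by move/disjoint_setI0; rewrite cardsU => ->; rewrite cards0 subn0. Qed.

Lemma sum_set_by_card (T : finType) (P : pred {set T}) (g : nat -> nat) D :
  (forall A, P A -> #|A| <= D) ->
  \sum_(A | P A) g #|A| = \sum_(k < D.+1) #|[set A | P A & #|A| == k]| * g k.
Proof.
move=> PD; transitivity (\sum_(A | P A) \sum_(k < D.+1) (#|A| == k) * g k).
  apply: eq_bigr => A /PD; rewrite -ltnS => ltAD.
  rewrite (bigD1 (Ordinal ltAD)) //= eqxx mul1n big1 ?addn0 // => k neqk.
  by case: eqP => // eqAk; case/eqP: neqk; apply: val_inj.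
rewrite exchange_big; apply: eq_bigr => k _.
rewrite -sum1dep_card big_distrl big_mkcondr /=; apply: eq_bigr => A _.
by case: eqP; rewrite ?mul1n ?mul0n.
Qed.

Lemma card_subsets_leq (T : finType) (F : {set T}) r :
  #|[set A : {set T} | A \subset F & #|A| <= r]| <= #|F|.+1 ^ r.
Proof.
rewrite -sum1dep_card (@sum_set_by_card _ _ (fun=> 1) r); last by move=> A /andP[].
rewrite -[#|F|.+1]add1n expnDn; apply: leq_sum => k _.
rewrite muln1 exp1n mul1n.
have -> : [set A : {set T} | (A \subset F) && (#|A| <= r) & #|A| == k] =
          [set A : {set T} | A \subset F & #|A| == k].
  apply/setP => A; rewrite !inE; case: (A \subset F) => //=.
  by case: eqP => [->|_]; rewrite ?andbF // andbT -ltnS ltn_ord.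
rewrite cards_draws; apply: leq_trans (bin_leq_expn _ _) _.
by rewrite leq_pmull // bin_gt0 -ltnS ltn_ord.
Qed.

(* j is the number of nontrivial cycles of the permutation inside the set. *)
Definition inv_subsets_bound N f d :=
  \sum_(j < d.+1) 'C(N, j) * ((2 * j <= d) * f.+1 ^ (d - 2 * j)).

Lemma card_weighted_pairs (T : finType) (F : {set T}) d :
  #|[set PQ : {set T} * {set T} | PQ.1 \subset F & #|PQ.1| + 2 * #|PQ.2| <= d]|
  <= inv_subsets_bound #|T| #|F| d.
Proof.
have -> : #|[set PQ : {set T} * {set T} | PQ.1 \subset F & #|PQ.1| + 2 * #|PQ.2| <= d]| =
    \sum_(P : {set T}) \sum_(Q : {set T}) ((P \subset F) && (#|P| + 2 * #|Q| <= d) : nat).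
  rewrite pair_bigA /= -sum1_card big_mkcond /=.
  by apply: eq_bigr => -[P Q] _; rewrite inE /=; case: ifP.
rewrite exchange_big /=.
pose G k := #|F|.+1 ^ (d - 2 * k).
apply: (@leq_trans (\sum_(Q : {set T} | 2 * #|Q| <= d) G #|Q|)).
  rewrite [leqRHS]big_mkcond /=; apply: leq_sum => Q _; case: ifP => leQd.
    apply: leq_trans (card_subsets_leq F (d - 2 * #|Q|)).
    rewrite -sum1dep_card [leqRHS]big_mkcond /=; apply: leq_sum => P _.
    by rewrite (leq_subRL _ leQd) addnC; case: ifP.
  rewrite leqn0; apply/eqP; apply: big1 => P _.
  by rewrite leqNgt ltn_addl ?andbF // ltnNge leQd.
rewrite (@sum_set_by_card T (fun Q => 2 * #|Q| <= d) G d); last first.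
  by move=> Q; apply: leq_trans; rewrite leq_pmull.
apply: leq_sum => k _; rewrite mulnA leq_mul //.
case: (leqP (2 * k) d) => le_kd.
  rewrite muln1 -card_draws; apply: subset_leq_card; apply/subsetP => A.
  by rewrite !inE => /andP[].
rewrite muln0 leqn0 cards_eq0; apply/eqP/setP => A; rewrite !inE.
by apply/negbTE/negP => /andP[+ /eqP eqAk]; rewrite eqAk leqNgt le_kd.
Qed.

Section InvariantSubsets.

Variables (T : finType) (s : {perm T}).

Let fixs := [set x | s x == x].

Definition cycle_rep x : T := odflt x [pick y in porbit s x].

Lemma cycle_rep_porbit x : cycle_rep x \in porbit s x.
Proof. by rewrite /cycle_rep; case: pickP => [y //|/(_ x)]; rewrite porbit_id. Qed.

Lemma cycle_rep_eq x y : y \in porbit s x -> cycle_rep y = cycle_rep x.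
Proof.
rewrite -eq_porbit_mem /cycle_rep => /eqP ->.
by case: pickP => [//|/(_ x)]; rewrite porbit_id.
Qed.

Lemma porbit_fixpoint x : s x = x -> porbit s x = [set x].
Proof.
move=> sx; apply/setP => y; rewrite inE; apply/porbitP/eqP => [[i ->] | ->].
  by rewrite permX; elim: i => //= i ->.
by exists 0; rewrite expg0 perm1.
Qed.

Lemma porbit_subset (A : {set T}) x : s @: A = A -> x \in A -> porbit s x \subset A.
Proof.
move=> sA xA; apply/subsetP => y /porbitP[i ->]; rewrite permX.
by elim: i => //= i IHi; rewrite -sA imset_f.
Qed.

Definition cycle_reps (A : {set T}) :=
  [set x in A | (cycle_rep x == x) && (s x != x)].

Lemma cycle_rep_succ (A : {set T}) x : x \in cycle_reps A -> cycle_rep (s x) = x.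
Proof.
rewrite inE => /and3P[_ /eqP rx _]; rewrite -{2}rx; apply: cycle_rep_eq.
by have := mem_porbit s 1 x; rewrite expg1.
Qed.

Lemma invariant_set_decomp (A : {set T}) : s @: A = A ->
  A = (A :&: fixs) :|: \bigcup_(x in cycle_reps A) porbit s x.
Proof.
move=> sA; apply/setP => y; rewrite !inE; apply/idP/idP => [yA | ].
  rewrite yA /=; case: (boolP (s y == y)) => //= nfix_y.
  have ry := cycle_rep_porbit y.
  apply/bigcupP; exists (cycle_rep y); last by rewrite porbit_sym.
  rewrite !inE (subsetP (porbit_subset sA yA)) //= (cycle_rep_eq ry) eqxx /=.
  apply: contra nfix_y => /eqP fix_r.
  by move: ry; rewrite porbit_sym (porbit_fixpoint fix_r) inE => /eqP ->; apply/eqP.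
case/orP => [/andP[] // | /bigcupP[x]]; rewrite inE => /andP[xA _].
exact: (subsetP (porbit_subset sA xA)).
Qed.

(* Each nontrivial cycle in A contributes its representative x and s x. *)
Lemma card_invariant_set (A : {set T}) : s @: A = A ->
  #|A :&: fixs| + 2 * #|cycle_reps A| <= #|A|.
Proof.
move=> sA; set Q := cycle_reps A.
have cardsQ : #|s @: Q| = #|Q| by rewrite card_imset //; apply: perm_inj.
rewrite mul2n -addnn -{2}cardsQ addnA -cardsU_disjoint; last first.
  by apply/pred0P => x /=; rewrite !inE; case: (s x == x); rewrite /= ?andbF.
rewrite -cardsU_disjoint; last first.
  apply/pred0P => y /=; apply/negbTE/negP => /andP[yU /imsetP[x xQ eqy]].
  move: yU (xQ); rewrite eqy /Q !inE => + /and3P[_ _ /eqP nsx].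
  case/orP => [/andP[_ /eqP/perm_inj/nsx] // | /and3P[_ /eqP rsx _]].
  by apply: nsx; rewrite -[in LHS]rsx; apply: cycle_rep_succ xQ.
apply: subset_leq_card; apply/subsetP => y; rewrite !inE.
case/orP => [/orP[/andP[] // | /andP[] //] | /imsetP[x xQ ->]].
by rewrite -sA imset_f //; move: xQ; rewrite inE => /andP[].
Qed.

Lemma card_invariant_subsets d :
  #|[set A : {set T} | #|A| == d & s @: A == A]| <= inv_subsets_bound #|T| #|fixs| d.
Proof.
apply: leq_trans (card_weighted_pairs fixs d).
pose split_fix A := (A :&: fixs, cycle_reps A).
rewrite -(card_in_imset (f := split_fix)); last first.
  move=> A B; rewrite !inE => /andP[_ /eqP sA] /andP[_ /eqP sB] [eqF eqQ].
  by rewrite (invariant_set_decomp sA) (invariant_set_decomp sB) eqF eqQ.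
apply: subset_leq_card; apply/subsetP => _ /imsetP[A + ->].
by rewrite !inE /= subsetIr => /andP[/eqP <- /eqP /card_invariant_set].
Qed.

End InvariantSubsets.

Lemma coprime_mulnI_mod n a x y : coprime a n -> x < n -> y < n ->
  a * x = a * y %[mod n] -> x = y.
Proof.
wlog le_yx : x y / y <= x.
  move=> IH ca xn yn exy; case: (leqP y x) => [le_yx | /ltnW le_xy].
    exact: IH.
  by symmetry; apply: IH.
move=> ca xn yn /eqP; rewrite eqn_mod_dvd ?leq_mul2l ?le_yx ?orbT //.
rewrite -mulnBr Gauss_dvdr ?(coprime_sym n) // => dvd_n_xy.
have [xy0|/dvdn_leq/(_ dvd_n_xy)] := posnP (x - y); lia.
Qed.

Lemma ord_pos n (x : 'I_n) : 0 < n.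
Proof. exact: leq_ltn_trans (leq0n x) (ltn_ord x). Qed.

Definition affm n a b (x : 'I_n) : 'I_n :=
  Ordinal (ltn_pmod (a * x + b) (ord_pos x)).

Lemma affimgE n a b (A : {set 'I_n}) : affimg a b A = affm a b @: A.
Proof.
apply/setP => x; rewrite inE; apply/existsP/imsetP.
  by case=> y /andP[yA /eqP exy]; exists y => //; apply: val_inj.
by case=> y yA ->; exists y; rewrite yA /=.
Qed.

Lemma affm_inj n a b : coprime a n -> injective (@affm n a b).
Proof.
move=> ca x y /(congr1 val) /= /eqP; rewrite eqn_modDr => /eqP exy.
by apply: val_inj; apply: coprime_mulnI_mod ca _ _ exy.
Qed.

(* Non-units are replaced by 1 only to make affp total; affgrp has no such pairs. *)
Definition unit_part n a := if coprime a n then a else 1.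

Lemma coprime_unit_part n a : coprime (unit_part n a) n.
Proof. by rewrite /unit_part; case: ifP; rewrite ?coprime1n. Qed.

Definition affp n (ab : 'I_n * 'I_n) : {perm 'I_n} :=
  perm (@affm_inj n _ ab.2 (coprime_unit_part n ab.1)).

Lemma affpE n (ab : 'I_n * 'I_n) x :
  coprime ab.1 n -> affp ab x = affm ab.1 ab.2 x.
Proof. by move=> ca; rewrite permE /unit_part ca. Qed.

Lemma affp_inj n : 1 < n -> {in affgrp n &, injective (@affp n)}.
Proof.
move=> n_gt1 [a b] [c e]; rewrite !inE /= => ca ce eq_ac.
have at_x x := congr1 (fun s : {perm 'I_n} => val (s x)) eq_ac.
have := at_x (Ordinal (ltnW n_gt1)).
rewrite /= !affpE //= !muln0 !add0n !modn_small // => eq_be.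
have := at_x (Ordinal n_gt1); rewrite /= !affpE //= !muln1 eq_be => /eqP.
by rewrite eqn_modDr !modn_small // => /eqP eq_ac'; congr (_, _); apply: val_inj.
Qed.

Definition affS n : {set {perm 'I_n}} := @affp n @: affgrp n.

Lemma affS_group n : 1 < n -> group_set (affS n).
Proof.
move=> n_gt1; apply/group_setP; split.
  apply/imsetP; exists (Ordinal n_gt1, Ordinal (ltnW n_gt1)).
    by rewrite inE coprime1n.
  apply/permP => x; rewrite affpE ?coprime1n // perm1; apply: val_inj.
  by rewrite /= mul1n addn0 modn_small.
move=> _ _ /imsetP[[a b] + ->] /imsetP[[c e] + ->]; rewrite !inE /= => ca ce.
have lt_ca : c * a %% n < n by rewrite ltn_pmod // ltnW.
have lt_cbe : (c * b + e) %% n < n by rewrite ltn_pmod // ltnW.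
apply/imsetP; exists (Ordinal lt_ca, Ordinal lt_cbe).
  by rewrite inE /= coprime_modl coprimeMl ca ce.
apply/permP => x; rewrite permM !affpE ?coprime_modl ?coprimeMl ?ca ?ce //.
apply: val_inj => /=; rewrite -modnDml modnMmr modnDml modnDmr.
rewrite -[in RHS]modnDml modnMml modnDml; congr (_ %% n).
by rewrite mulnDr mulnA addnA (mulnC c a).
Qed.

Definition affG n (n_gt1 : 1 < n) : {group {perm 'I_n}} := Group (affS_group n_gt1).

Lemma card_affG n (n_gt1 : 1 < n) : #|affG n_gt1| = n * totient n.
Proof.
rewrite /= /affS card_in_imset; last exact: affp_inj.
have -> : affgrp n = setX [set a : 'I_n | coprime a n] [set: 'I_n].
  by apply/setP => -[a b]; rewrite !inE andbT.
rewrite cardsX cardsT card_ord mulnC; congr (_ * _).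
rewrite totient_count_coprime big_mkord -sum1_card big_mkcond /=.
by apply: eq_bigr => a _; rewrite inE coprime_sym; case: coprime.
Qed.

Lemma orbit_affG n (n_gt1 : 1 < n) (A : {set 'I_n}) :
  orbit 'P^* (affG n_gt1) A = aff_orbit A.
Proof.
rewrite /orbit /aff_orbit /= /affS -imset_comp; apply: eq_in_imset => ab.
rewrite inE => ca /=; rewrite affimgE; apply: eq_imset => x /=.
by rewrite apermE affpE.
Qed.

Lemma acts_affG_dsubsets n (n_gt1 : 1 < n) d :
  [acts affG n_gt1, on dsubsets n d | 'P^*].
Proof.
apply/subsetP => s _; rewrite !inE; apply/subsetP => A; rewrite !inE /=.
by rewrite card_imset //; apply: perm_inj.
Qed.

Lemma sum_card_fix_affG n (n_gt1 : 1 < n) d :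
  \sum_(s in affG n_gt1) #|('Fix_(dsubsets n d | 'P^*)[s])%g| =
  p_nd n d * (n * totient n).
Proof.
rewrite Frobenius_Cauchy ?acts_affG_dsubsets // card_affG; congr (_ * _).
by apply: eq_card => O; apply/imsetP/imsetP => -[A dA ->]; exists A; rewrite ?orbit_affG.
Qed.

Definition nfix n a b := #|[set y : 'I_n | (a * y + b) %% n == y]|.

Lemma card_fix_affp n (ab : 'I_n * 'I_n) d : coprime ab.1 n ->
  #|('Fix_(dsubsets n d | 'P^*)[affp ab])%g| <=
  inv_subsets_bound n (nfix n ab.1 ab.2) d.
Proof.
move=> ca; have := card_invariant_subsets (affp ab) d; rewrite card_ord.
have -> : #|[set x | affp ab x == x]| = nfix n ab.1 ab.2.
  by apply: eq_card => x; rewrite !inE affpE // -val_eqE.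
apply: leq_trans; apply: subset_leq_card; apply/subsetP => A.
by rewrite !inE sub1set inE.
Qed.

Lemma nfix_leq n a b : nfix n a b <= n.
Proof. by apply: leq_trans (max_card _) _; rewrite card_ord. Qed.

(* A point y is fixed by x |-> a x + b for at most one translation b. *)
Lemma sum_nfix_leq n a : \sum_(b < n) nfix n a b <= n.
Proof.
under eq_bigr => b _ do rewrite /nfix -sum1dep_card big_mkcond /=.
rewrite exchange_big /= -[n in _ <= n]card_ord -sum1_card.
apply: leq_sum => y _; rewrite -big_mkcond /=.
case: (pickP (fun b : 'I_n => (a * y + b) %% n == y)) => [b0 fix_b0 | no_b]; last first.
  by rewrite big_pred0.
rewrite (bigD1 b0) // big1 // => b /andP[fix_b /eqP[]]; apply: val_inj.
have : b = b0 %[mod n].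
  by apply/eqP; rewrite -(eqn_modDl (a * y)) (eqP fix_b) (eqP fix_b0).
by rewrite !modn_small.
Qed.

Lemma fixpoints_diff_dvdn n a b x0 y : x0 < n -> y < n ->
  (a.+1 * x0 + b) %% n = x0 -> (a.+1 * y + b) %% n = y ->
  n %| a * ((y + n - x0) %% n).
Proof.
move=> x0n yn fix_x0 fix_y; set t := (y + n - x0) %% n.
have y_eq : y = x0 + t %[mod n].
  by rewrite modnDmr (_ : x0 + (y + n - x0) = y + n) ?modnDr //; lia.
have fix_t : a.+1 * (x0 + t) + b = x0 + t %[mod n].
  rewrite -y_eq (modn_small yn) -[in RHS]fix_y; apply/eqP; rewrite eqn_modDr; apply/eqP.
  by rewrite -modnMmr -[in RHS]modnMmr y_eq.
have : x0 + a.+1 * t = x0 + t %[mod n].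
  by rewrite -fix_t mulnDr addnAC -[in RHS]modnDml fix_x0.
by rewrite mulSn addnA -[in RHS](addn0 (x0 + t)) => /eqP; rewrite eqn_modDl mod0n.
Qed.

(* The fixed points of x |-> (a+1) x + b lie in one coset of the kernel of
   x |-> a x, which has gcd(a, n) elements. *)
Lemma nfix_leq_gcd n a b : nfix n a b <= gcdn a.-1 n.
Proof.
case: a => [|a] /=; first by rewrite gcd0n nfix_leq.
rewrite /nfix; set S := [set y : 'I_n | _].
case: (pickP [in S]) => [x0 Sx0 | S0]; last by rewrite (eq_card0 S0).
have n_gt0 := ord_pos x0; set g := gcdn a n.
have g_gt0 : 0 < g by rewrite gcdn_gt0 n_gt0 orbT.
set q := n %/ g; have n_eq : q * g = n by rewrite divnK // dvdn_gcdr.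
have q_gt0 : 0 < q by rewrite -(ltn_pmul2r g_gt0) mul0n n_eq.
pose t (y : 'I_n) := (y + n - x0) %% n.
have t_lt y : t y %/ q < g by rewrite ltn_divLR // mulnC n_eq ltn_mod.
have fix_x0 : (a.+1 * x0 + b) %% n = x0 by move: Sx0; rewrite inE => /eqP.
have q_dvd y : y \in S -> q %| t y.
  rewrite inE => /eqP fix_y.
  have dvd_n_gt : n %| g * t y.
    have := fixpoints_diff_dvdn (ltn_ord x0) (ltn_ord y) fix_x0 fix_y.
    by move=> dvd_at; rewrite muln_gcdl dvdn_gcd dvd_at dvdn_mulr.
  by rewrite -(dvdn_pmul2r g_gt0) n_eq mulnC.
have tK y : (x0 + t y) %% n = y.
  by rewrite modnDmr (_ : x0 + (y + n - x0) = y + n) ?modnDr ?modn_small //; lia.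
rewrite -[g]card_ord; apply: (@leq_card_in _ _ (fun y => Ordinal (t_lt y))).
move=> y1 y2 Sy1 Sy2 /(congr1 val) /= eq_t; apply: val_inj => /=.
by rewrite -(tK y1) -(tK y2) -(divnK (q_dvd _ Sy1)) -(divnK (q_dvd _ Sy2)) eq_t.
Qed.

Lemma expnS_leq_mul f M r : f <= M -> f ^ r.+1 <= M ^ r * f.
Proof. by move=> le_fM; rewrite expnSr leq_mul2r leq_expn2r ?orbT. Qed.

Lemma sum_nfix_expn n r :
  \sum_(a < n) \sum_(b < n) nfix n a b ^ r <= n ^ r.+1 + n ^ 2.
Proof.
case: r => [|r].
  under eq_bigr => a _ do under eq_bigr => b _ do rewrite expn0.
  by rewrite !sum1_card card_ord sum_nat_const card_ord leq_addl.
apply: leq_trans (leq_addr _ _).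
rewrite expnS -[n in n * _]card_ord -sum_nat_const; apply: leq_sum => a _.
apply: (@leq_trans (\sum_(b < n) n ^ r * nfix n a b)).
  by apply: leq_sum => b _; apply: expnS_leq_mul; apply: nfix_leq.
by rewrite -big_distrr /= expnSr leq_mul2l sum_nfix_leq orbT.
Qed.

Lemma sum_nfix_expnS n r :
  \sum_(a < n) \sum_(b < n) nfix n a b ^ r.+1 <= n * \sum_(a < n) gcdn a.-1 n ^ r.
Proof.
rewrite big_distrr /=; apply: leq_sum => a _.
apply: (@leq_trans (\sum_(b < n) gcdn a.-1 n ^ r * nfix n a b)).
  by apply: leq_sum => b _; apply: expnS_leq_mul; apply: nfix_leq_gcd.
by rewrite -big_distrr /= mulnC leq_mul2r sum_nfix_leq orbT.
Qed.

(* j (n/j)^3 <= n^3 (1/(j-1) - 1/j), and the right-hand side telescopes. *)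
Lemma sum_mul_div_cube n N : \sum_(2 <= j < N.+2) j * (n %/ j) ^ 3 <= n ^ 3.
Proof.
suff: (\sum_(2 <= j < N.+2) j * (n %/ j) ^ 3) * N.+1 <= n ^ 3 * N.
  move=> le_S; rewrite -(leq_pmul2r (ltn0Sn N)); apply: leq_trans le_S _.
  by rewrite leq_mul2l leqnSn orbT.
elim: N => [|N IHN]; first by rewrite big_geq.
rewrite big_nat_recr //=.
have last_term : N.+2 * (n %/ N.+2) ^ 3 * (N.+2 * N.+1) <= n ^ 3.
  apply: (@leq_trans ((N.+2 * (n %/ N.+2)) ^ 3)).
    set m := n %/ N.+2; rewrite expnMn (_ : N.+2 ^ 3 = N.+2 * (N.+2 * N.+2)).
      by rewrite mulnC mulnA leq_mul2r; apply/orP; right; nia.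
    by rewrite !expnS expn0 muln1.
  by rewrite leq_exp2r // mulnC leq_divM.
rewrite -(leq_pmul2l (ltn0Sn N)); move: IHN last_term.
set S := \sum_(2 <= j < N.+2) _; set X := N.+2 * _; set Y := n ^ 3; nia.
Qed.

Lemma card_gcdn_class n j : #|[set u : 'I_n | n %/ gcdn u n == j]| <= j.+1.
Proof.
pose h (u : 'I_n) : 'I_j.+1 := inord (u %/ gcdn u n).
rewrite -[j.+1]card_ord; apply: (@leq_card_in _ _ h) => u v.
have cls_lt (w : 'I_n) : n %/ gcdn w n == j -> w %/ gcdn w n < j.+1.
  by move/eqP <-; rewrite ltnS leq_div2r // ltnW.
have cls_g (w : 'I_n) : n %/ gcdn w n == j -> gcdn w n = n %/ j.
  by move/eqP <-; rewrite divnA ?dvdn_gcdr // mulKn // (ord_pos w).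
have cls_dvd (w : 'I_n) : n %/ gcdn w n == j -> n %/ j %| w.
  by move/cls_g <-; apply: dvdn_gcdl.
rewrite !inE => cu cv /(congr1 val); rewrite /= !inordK ?cls_lt //.
rewrite (cls_g u cu) (cls_g v cv) => eq_div; apply: val_inj => /=.
by rewrite -(divnK (cls_dvd u cu)) -(divnK (cls_dvd v cv)) eq_div.
Qed.

Lemma sum_gcdn_cube n : \sum_(u < n | 0 < u) gcdn u n ^ 3 <= 2 * n ^ 3.
Proof.
case: (posnP n) => [->|n_gt0]; first by rewrite big_ord0.
pose k (u : 'I_n) := n %/ gcdn u n.
have k_lt u : k u < n.+1 by rewrite ltnS leq_div.
have gk (u : 'I_n) : gcdn u n = n %/ k u by rewrite /k divnA ?dvdn_gcdr // mulKn.
have k_gt1 (u : 'I_n) : 0 < u -> 1 < k u.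
  move=> u_gt0; rewrite /k ltn_divRL ?dvdn_gcdr // mul1n.
  exact: leq_ltn_trans (dvdn_leq u_gt0 (dvdn_gcdl u n)) (ltn_ord u).
rewrite (partition_big (fun u => inord (k u) : 'I_n.+1) xpredT) //=.
apply: leq_trans (leq_mul (leqnn 2) (sum_mul_div_cube n n.-1)).
rewrite prednK // big_geq_mkord big_distrr [leqRHS]big_mkcond /=.
apply: leq_sum => j _.
have kj (u : 'I_n) : (0 < u) && (inord (k u) == j) -> k u = j.
  by case/andP=> _ /eqP <-; rewrite inordK.
rewrite (eq_bigr (fun=> (n %/ j) ^ 3)) => [|u /kj <-]; last by rewrite gk.
rewrite sum_nat_cond_const; case: (ltnP 1 j) => [j_gt1 | j_le1]; last first.
  rewrite leqn0 muln_eq0 cards_eq0; apply/orP; left.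
  apply/eqP/setP => u; rewrite !inE; apply/negP => cls; case/andP: (cls) => u_gt0 _.
  by have := k_gt1 u u_gt0; rewrite (kj u cls) ltnNge j_le1.
rewrite mulnA leq_mul2r; apply/orP; right.
apply: leq_trans (_ : j.+1 <= 2 * j); last by lia.
apply: leq_trans (card_gcdn_class n j); apply: subset_leq_card; apply/subsetP => u.
by rewrite !inE => /kj/eqP.
Qed.

Lemma sum_gcdn_pred_expn n M : 0 < n -> 3 <= M ->
  \sum_(a < n) gcdn a.-1 n ^ M <= 4 * n ^ M.
Proof.
move=> n_gt0 M_ge3; have g_le u : gcdn u n <= n by rewrite dvdn_leq ?dvdn_gcdr.
have pos_part : \sum_(u < n | 0 < u) gcdn u n ^ M <= 2 * n ^ M.
  rewrite -(subnK M_ge3) expnD mulnCA.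
  apply: (@leq_trans (\sum_(u < n | 0 < u) n ^ (M - 3) * gcdn u n ^ 3)).
    by apply: leq_sum => u _; rewrite expnD leq_mul2r leq_expn2r ?orbT.
  by rewrite -big_distrr leq_mul2l sum_gcdn_cube orbT.
have all_part : \sum_(u < n) gcdn u n ^ M <= 3 * n ^ M.
  rewrite (bigD1 (Ordinal n_gt0)) //= gcd0n (mulSn 2) leq_add2l.
  apply: leq_trans pos_part; rewrite (eq_bigl (fun u : 'I_n => 0 < u)) // => u.
  by rewrite lt0n -val_eqE.
clear g_le pos_part; case: n n_gt0 all_part => // m _ all_part.
rewrite big_ord_recl /= gcd0n (mulSn 3) leq_add2l; apply: leq_trans all_part.
by rewrite big_ord_recr /= leq_addr.
Qed.

Lemma succn_expn_leq f r : f.+1 ^ r <= 2 ^ r * (f ^ r + 1).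
Proof.
case: f => [|f].
  by rewrite exp1n muln_gt0 expn_gt0 addn_gt0 orbT.
apply: (@leq_trans ((2 * f.+1) ^ r)).
  by rewrite leq_expn2r // mul2n -addnn addSn ltnS leq_addl.
by rewrite expnMn leq_mul2l leq_addr orbT.
Qed.

Lemma sum_succn_nfix_expn n r :
  \sum_(a < n) \sum_(b < n) (nfix n a b).+1 ^ r <=
  2 ^ r * (\sum_(a < n) \sum_(b < n) nfix n a b ^ r + n * n).
Proof.
apply: (@leq_trans (\sum_(a < n) \sum_(b < n) 2 ^ r * (nfix n a b ^ r + 1))).
  by apply: leq_sum => a _; apply: leq_sum => b _; apply: succn_expn_leq.
under eq_bigr => a _ do rewrite -big_distrr /=.
rewrite -big_distrr /= leq_mul2l; apply/orP; right.
rewrite -[n in n * _]card_ord -sum_nat_const -big_split /=; apply: leq_sum => a _.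
by rewrite big_split /= sum1_card card_ord.
Qed.

Lemma bin_sum_nfix_leq n d j : 4 <= d -> d <= n -> 2 * j <= d ->
  'C(n, j) * \sum_(a < n) \sum_(b < n) (nfix n a b).+1 ^ (d - 2 * j) <=
  5 * 2 ^ d * n ^ d.
Proof.
move=> d_ge4 le_dn le_jd; have n_gt0 : 0 < n by lia.
have n2_le : n * n <= n ^ d by rewrite mulnn leq_pexp2l //; lia.
case: j le_jd => [|j] le_jd.
  rewrite bin0 mul1n muln0 subn0; apply: leq_trans (sum_succn_nfix_expn n d) _.
  rewrite (mulnC 5) -mulnA leq_mul2l (mulSn 4) addnC leq_add ?orbT //.
  have d_eq : d = d.-1.+1 by lia.
  rewrite {1}d_eq; apply: leq_trans (sum_nfix_expnS n d.-1) _.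
  apply: leq_trans (leq_mul (leqnn n) (sum_gcdn_pred_expn n_gt0 (_ : 3 <= d.-1))) _.
    by lia.
  by rewrite mulnCA -expnS -d_eq.
set r := d - 2 * j.+1.
apply: (@leq_trans (n ^ j.+1 * (2 ^ r * (n ^ r.+1 + n ^ 2 + n * n)))).
  rewrite leq_mul ?bin_leq_expn //; apply: leq_trans (sum_succn_nfix_expn n r) _.
  by rewrite leq_mul2l leq_add2r sum_nfix_expn orbT.
have le_2r : 2 ^ r <= 2 ^ d by apply: leq_pexp2l => //; lia.
have le1 : n ^ j.+1 * n ^ r.+1 <= n ^ d by rewrite -expnD leq_pexp2l //; lia.
have le2 : n ^ j.+1 * n ^ 2 <= n ^ d by rewrite -expnD leq_pexp2l //; lia.
have le3 : n ^ j.+1 * (n * n) <= n ^ d by rewrite mulnn -expnD leq_pexp2l //; lia.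
rewrite mulnCA; apply: (@leq_trans (2 ^ d * (n ^ d + n ^ d + n ^ d))); last by lia.
by rewrite leq_mul // !mulnDr !leq_add.
Qed.

Lemma sum_card_fix_affG_leq n (n_gt1 : 1 < n) d : 4 <= d -> d <= n ->
  \sum_(s in affG n_gt1) #|('Fix_(dsubsets n d | 'P^*)[s])%g| <=
  d.+1 * (5 * 2 ^ d * n ^ d).
Proof.
move=> d_ge4 le_dn; rewrite [X in X <= _]big_imset /=; last exact: affp_inj.
pose B (ab : 'I_n * 'I_n) := inv_subsets_bound n (nfix n ab.1 ab.2) d.
apply: (@leq_trans (\sum_(ab in affgrp n) B ab)).
  by apply: leq_sum => ab; rewrite inE => /card_fix_affp.
apply: (@leq_trans (\sum_(ab : 'I_n * 'I_n) B ab)).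
  by rewrite [leqRHS](bigID [in affgrp n]) /= leq_addr.
rewrite -(pair_bigA _ (fun a b => B (a, b))) /= /B /inv_subsets_bound.
under eq_bigr => a _ do rewrite exchange_big /=.
rewrite exchange_big /= -[d.+1 in leqRHS]card_ord -sum_nat_const.
apply: leq_sum => j _.
under eq_bigr => a _ do rewrite -big_distrr /= -big_distrr /=.
rewrite -big_distrr /= -big_distrr /= mulnCA.
by case: (leqP (2 * j) d) => le_jd; rewrite ?mul0n // mul1n bin_sum_nfix_leq.
Qed.

Lemma bin_leq_sum_card_fix_affG n (n_gt1 : 1 < n) d :
  'C(n, d) <= \sum_(s in affG n_gt1) #|('Fix_(dsubsets n d | 'P^*)[s])%g|.
Proof.
rewrite (bigD1 1%g) ?group1 //=; apply: leq_trans (leq_addr _ _).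
rewrite -[n in 'C(n, _)]card_ord -card_draws; apply: subset_leq_card.
by apply/subsetP => A; rewrite !inE => ->; rewrite sub1set inE /= act1 eqxx.
Qed.

Lemma p_nd_bounds n d : 4 <= d -> d <= n ->
  [/\ n ^ d.-1 <= d ^ d * (p_nd n d * totient n),
      p_nd n d * totient n <= d.+1 * (5 * 2 ^ d) * n ^ d.-1
    & n ^ (d - 2) <= d ^ d * p_nd n d].
Proof.
move=> d_ge4 le_dn; have n_gt1 : 1 < n by lia.
have n_gt0 : 0 < n by lia.
have burnside := sum_card_fix_affG n_gt1 d.
have lower := bin_leq_sum_card_fix_affG n_gt1 d; rewrite burnside in lower.
have upper := sum_card_fix_affG_leq n_gt1 d_ge4 le_dn; rewrite burnside in upper.
have d_eq : d = d.-1.+1 by lia.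
have low : n ^ d.-1 <= d ^ d * (p_nd n d * totient n).
  rewrite -(leq_pmul2l n_gt0) -expnS -d_eq; apply: leq_trans (expn_leq_bin le_dn) _.
  by rewrite mulnCA leq_mul2l mulnCA lower orbT.
split => //.
  rewrite -(leq_pmul2l n_gt0) mulnCA [leqRHS]mulnCA -expnS -d_eq.
  by apply: leq_trans upper _; rewrite mulnA.
rewrite -(leq_pmul2l n_gt0) -expnS (_ : (d - 2).+1 = d.-1); last by lia.
apply: leq_trans low _.
by rewrite [leqRHS]mulnCA leq_mul2l [leqLHS]mulnC leq_mul2r totient_leq !orbT.
Qed.

Import Order.TTheory GRing.Theory Num.Theory.
Local Open Scope ring_scope.

Theorem theorem8p1 (d : nat) (hd : (4 <= d)%N) :
  exists c C : rat, 0 < c /\ 0 < C /\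
    forall n : nat, (d <= n)%N ->
      c * (n%:R ^+ d.-1 / (totient n)%:R) <= (p_nd n d)%:R /\
      (p_nd n d)%:R <= C * (n%:R ^+ d.-1 / (totient n)%:R) /\
      c * n%:R ^+ (d - 2) <= (p_nd n d)%:R.
Proof.
exists (d ^ d)%:R^-1, (d.+1 * (5 * 2 ^ d))%:R.
have dd_gt0 : 0 < (d ^ d)%:R :> rat by rewrite ltr0n expn_gt0; case: d hd.
split; first by rewrite invr_gt0.
split; first by rewrite ltr0n !muln_gt0 expn_gt0.
move=> n le_dn; have [low up low2] := p_nd_bounds hd le_dn.
have tot_gt0 : 0 < (totient n)%:R :> rat by rewrite ltr0n totient_gt0; lia.
rewrite !ler_pdivrMl // ler_pdivrMr // mulrA ler_pdivlMr // -!natrX -!natrM !ler_nat.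
by rewrite -mulnA.
Qed.
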